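(* Let $R$ be a ring, $A$ an $R$-algebra, $n\in\{0,1,\dots,\infty\}$, and $M$ an $A_n$-module. Regard $M\hat\otimes_{A_n}B_n$ as an $A$-module via $\gamma_n^\sharp\colon A\to B_n$ (for finite $n$, $\hat\otimes_{A_n}=\otimes_{A_n}$). Then there is a natural isomorphism \[ \operatorname{Der}_R(A_n,M)\simeq \operatorname{Der}_R(A,M\hat\otimes_{A_n}B_n). \] If $m>n$ and $M$ is an $A_m$-module, then the natural map $\operatorname{Der}_R(A_m,M)\to\operatorname{Der}_R(A_n,M)$ corresponds under these isomorphisms to the map induced by the projection $\mu^\sharp_{m,n}\colon B_m\to B_n\otimes_{A_n}A_m$ (i.e. $A_m[t]/(t^{m+1})\to A_m[t]/(t^{n+1})$, resp. $A_\infty[[t]]\to A_\infty[t]/(t^{n+1})$).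
   Context: For an $R$-algebra $A$ and $n\in\{0,1,\dots,\infty\}$, $A_n$ denotes the $R$-algebra representing the functor $C\mapsto\operatorname{Hom}_{R\text{-alg}}(A,C[t]/(t^{n+1}))$ for finite $n$ and $C\mapsto\operatorname{Hom}_{R\text{-alg}}(A,C[[t]])$ for $n=\infty$ (so $\operatorname{Spec}A_n$ is the jet scheme/arc space of $\operatorname{Spec}A$ over $\operatorname{Spec}R$). $B_n=A_n[t]/(t^{n+1})$ for finite $n$, $B_\infty=A_\infty[[t]]$ (with $t$-adic topology), regarded as $A_n$-module via the inclusion $A_n\subset B_n$, and $\gamma_n^\sharp\colon A\to B_n$ is the universal homomorphism corresponding to the identity of $A_n$. Completed tensor product $\hat\otimes$ is the completion of the ordinary tensor product; $M\hat\otimes_{A_\infty}B_\infty=\prod_{i\ge0}Mt^i$. *)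

From HB Require Import structures.
From mathcomp Require Import all_boot all_order all_algebra.
Set Implicit Arguments. Unset Strict Implicit. Unset Printing Implicit Defensive.
Import GRing.Theory.
Local Open Scope ring_scope.

(* Jet orders n ∈ {0,1,...,∞}: [Some n] is the finite order n, [None] is ∞. *)
Definition jorder := option nat.

Definition inb (i : nat) (n : jorder) : bool :=
  if n is Some n' then (i <= n')%N else true.

Definition jlt (n m : jorder) : bool :=
  match n, m with
  | Some n', Some m' => (n' < m')%N
  | Some _, None => true
  | None, _ => false
  end.

Definition is_alg_hom (R : comPzRingType) (S T : comAlgType R) (f : S -> T) :=
  [/\ forall r x y, f (r *: x + y) = r *: f x + f y,
      f 1 = 1 &
      forall x y, f (x * y) = f x * f y].

(* An R-algebra homomorphism  phi : A -> C[t]/(t^(n+1))  (resp. C[[t]] for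
   n = ∞), written via its coefficients  phi a = \sum_i (phi i a) t^i
   (with phi i a = 0 for i > n). *)
Definition is_jet_hom (R : comPzRingType) (A C : comAlgType R) (n : jorder)
    (phi : nat -> A -> C) :=
  [/\ forall i a, ~~ inb i n -> phi i a = 0,
      forall i r a b, phi i (r *: a + b) = r *: phi i a + phi i b,
      forall i, phi i 1 = (i == 0%N)%:R &
      forall k a b, inb k n ->
        phi k (a * b) = \sum_(i < k.+1) phi i a * phi (k - i)%N b].

(* (An, gamma) represents C |-> Hom_R-alg(A, C[t]/(t^(n+1))) (resp. C[[t]]):
   gamma is the universal homomorphism gamma_n^# : A -> B_n. *)
Definition is_jet_algebra (R : comPzRingType) (A : comAlgType R) (n : jorder)
    (An : comAlgType R) (gamma : nat -> A -> An) :=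
  is_jet_hom n gamma /\
  forall (C : comAlgType R) (phi : nat -> A -> C), is_jet_hom n phi ->
    exists f : An -> C,
      [/\ is_alg_hom f, forall i a, f (gamma i a) = phi i a &
          forall g : An -> C, is_alg_hom g ->
            (forall i a, g (gamma i a) = phi i a) -> forall x, g x = f x].

(* R-derivations S -> M, where M is an S-module through the action [act]
   (so the R-module structure of M is r.m = act (r%:A) m). *)
Definition is_der (R : comPzRingType) (S : comAlgType R) (M : zmodType)
    (act : S -> M -> M) (D : S -> M) :=
  [/\ forall r x, D (r *: x) = act (r%:A) (D x),
      forall x y, D (x + y) = D x + D y &
      forall x y, D (x * y) = act x (D y) + act y (D x)].

(* Elements of M (^)_{An} B_n = \prod_{i <= n} M t^i are represented as
   sequences [m : nat -> M] (with m k = 0 for k > n).  The A-module structure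
   via gamma : A -> B_n, where M is an An-module through [act]: *)
Definition jact (R : comPzRingType) (A An : comAlgType R) (M : zmodType)
    (act : An -> M -> M) (n : jorder) (gamma : nat -> A -> An)
    (a : A) (m : nat -> M) : nat -> M :=
  fun k => if inb k n then \sum_(i < k.+1) act (gamma i a) (m (k - i)%N) else 0.

Definition is_derB (R : comPzRingType) (A An : comAlgType R) (M : zmodType)
    (act : An -> M -> M) (n : jorder) (gamma : nat -> A -> An)
    (E : A -> nat -> M) :=
  [/\ forall a k, ~~ inb k n -> E a k = 0,
      forall r a k, E (r *: a) k = jact act n gamma (r%:A) (E a) k,
      forall a b k, E (a + b) k = E a k + E b k &
      forall a b k, E (a * b) k =
        jact act n gamma a (E b) k + jact act n gamma b (E a) k].

Definition derPhi (R : comPzRingType) (A An : comAlgType R) (M : zmodType)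
    (n : jorder) (gamma : nat -> A -> An) (D : An -> M) : A -> nat -> M :=
  fun a k => if inb k n then D (gamma k a) else 0.

(* map induced by the projection B_m -> B_n (x) A_m: truncation above degree n *)
Definition jtrunc (M : zmodType) (n : jorder) (m : nat -> M) : nat -> M :=
  fun k => if inb k n then m k else 0.

From HB Require Import structures.
From mathcomp Require Import all_boot all_order all_algebra.
Import GRing.Theory.
Set Implicit Arguments. Unset Strict Implicit.
Local Open Scope ring_scope.

(* An R-derivation D : S -> M is the same thing as an R-algebra section
   x |-> (x, D x) of the trivial square-zero extension S (+) M -> S.  Likewise,
   writing E a = \sum_k E a k t^k, an R-derivation E : A -> M (^)_{An} B_n is
   the same thing as a jet homomorphism a |-> \sum_k (gamma_k a, E a k) t^k
   into (An (+) M)[t]/(t^(n+1)) lifting gamma.  By the universal property of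
   An such a jet homomorphism is induced by a unique algebra map An -> An (+) M,
   which is a section (again by uniqueness), i.e. a derivation D with
   D (gamma_k a) = E a k. *)

Section TrivialExtension.
Variables (R : comPzRingType) (S : comAlgType R) (M : lmodType S).

Definition triv_ext : Type := (S * M)%type.
HB.instance Definition _ := GRing.Zmodule.on triv_ext.

Definition triv_ext_scale (r : R) (p : triv_ext) : triv_ext :=
  (r *: p.1, r%:A *: p.2).

Lemma triv_ext_scalerA a b v :
  triv_ext_scale a (triv_ext_scale b v) = triv_ext_scale (a * b) v.
Proof.
by case: v => x m; rewrite /triv_ext_scale /= !scalerA -scalerAl mul1r scalerA.
Qed.

Lemma triv_ext_scale1r : left_id 1 triv_ext_scale.
Proof. by case=> x m; rewrite /triv_ext_scale /= !scale1r. Qed.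

Lemma triv_ext_scalerDr : right_distributive triv_ext_scale +%R.
Proof. by move=> r [x m] [y n]; rewrite /triv_ext_scale /= !scalerDr. Qed.

Lemma triv_ext_scalerDl v : {morph triv_ext_scale^~ v : a b / a + b}.
Proof. by move=> a b; case: v => x m; rewrite /triv_ext_scale /= !scalerDl. Qed.

HB.instance Definition _ := GRing.Zmodule_isLmodule.Build R triv_ext
  triv_ext_scalerA triv_ext_scale1r triv_ext_scalerDr triv_ext_scalerDl.

Definition triv_ext_one : triv_ext := (1, 0).

Definition triv_ext_mul (p q : triv_ext) : triv_ext :=
  (p.1 * q.1, p.1 *: q.2 + q.1 *: p.2).

Lemma triv_ext_mulA : associative triv_ext_mul.
Proof.
case=> x m [y n] [z o]; rewrite /triv_ext_mul /=; congr pair; first exact: mulrA.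
by rewrite !scalerDr !scalerA addrA [z * y]mulrC [z * x]mulrC addrAC.
Qed.

Lemma triv_ext_mulC : commutative triv_ext_mul.
Proof. by case=> x m [y n]; rewrite /triv_ext_mul /= mulrC addrC. Qed.

Lemma triv_ext_mul1 : left_id triv_ext_one triv_ext_mul.
Proof. by case=> x m; rewrite /triv_ext_mul /= mul1r scale1r scaler0 addr0. Qed.

Lemma triv_ext_mulDl : left_distributive triv_ext_mul +%R.
Proof.
case=> x m [y n] [z o]; rewrite /triv_ext_mul /=; congr pair; first exact: mulrDl.
by rewrite scalerDl scalerDr addrACA.
Qed.

Lemma triv_ext_one_neq0 : triv_ext_one != 0.
Proof. by apply/eqP => -[] /eqP; rewrite oner_eq0. Qed.

HB.instance Definition _ := GRing.Zmodule_isComNzRing.Build triv_ext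
  triv_ext_mulA triv_ext_mulC triv_ext_mul1 triv_ext_mulDl triv_ext_one_neq0.

Lemma triv_ext_scalerAl (a : R) (u v : triv_ext) : a *: (u * v) = (a *: u) * v.
Proof.
case: u v => [x m] [y n].
change (triv_ext_scale a (triv_ext_mul (x, m) (y, n))
        = triv_ext_mul (triv_ext_scale a (x, m)) (y, n)).
rewrite /triv_ext_mul /triv_ext_scale /=; congr pair; first exact: scalerAl.
by rewrite scalerDr !scalerA mulr_algl [y * _]mulrC mulr_algl.
Qed.

HB.instance Definition _ := GRing.Lmodule_isLalgebra.Build R triv_ext
  triv_ext_scalerAl.
HB.instance Definition _ := GRing.Lalgebra_isComAlgebra.Build R triv_ext.

Lemma triv_ext_addE (p q : triv_ext) : p + q = (p.1 + q.1, p.2 + q.2).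
Proof. by []. Qed.

Lemma triv_ext_mulE (p q : triv_ext) :
  p * q = (p.1 * q.1, p.1 *: q.2 + q.1 *: p.2).
Proof. by []. Qed.

Lemma triv_ext_scaleE r (p : triv_ext) : r *: p = (r *: p.1, r%:A *: p.2).
Proof. by []. Qed.

Lemma triv_ext_oneE : (1 : triv_ext) = (1, 0).
Proof. by []. Qed.

Lemma triv_ext_natE k : (k%:R : triv_ext) = (k%:R, 0).
Proof. by elim: k => [|k IH] //; rewrite mulrS IH triv_ext_addE /= mulrS addr0. Qed.

Lemma triv_ext_sumE N (F : 'I_N -> triv_ext) :
  \sum_(i < N) F i = (\sum_(i < N) (F i).1, \sum_(i < N) (F i).2).
Proof. by elim: N F => [|N IH] F; rewrite ?big_ord0 // !big_ord_recr IH. Qed.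

End TrivialExtension.
Arguments triv_ext {R S} M.

Lemma idem_add_eq0 (V : zmodType) (x : V) : x = x + x -> x = 0.
Proof. by move/(congr1 (+%R^~ (- x))); rewrite subrr addrK. Qed.

Lemma sum_ord_sub_rev (V : zmodType) k (F : nat -> nat -> V) :
  \sum_(i < k.+1) F i (k - i)%N = \sum_(i < k.+1) F (k - i)%N i.
Proof.
rewrite (reindex_inj rev_ord_inj) /=; apply: eq_bigr => i _.
by rewrite subSS subKn // -ltnS.
Qed.

Lemma inb_le i j n : inb i n -> (j <= i)%N -> inb j n.
Proof. by case: n => //= n' /[swap]; apply: leq_trans. Qed.

Lemma inb_jlt n m k : jlt n m -> inb k n -> inb k m.
Proof. by case: n m => [n'|] [m'|] //= /ltnW /[swap]; apply: leq_trans. Qed.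

Section Homomorphisms.
Variable R : comPzRingType.

Section AlgHom.
Variables (S T : comAlgType R) (f : S -> T).
Hypothesis f_hom : is_alg_hom f.

Lemma alg_hom0 : f 0 = 0.
Proof.
case: f_hom => hl _ _; apply: idem_add_eq0.
by have := hl 1 0 0; rewrite !scale1r addr0.
Qed.

Lemma alg_homD x y : f (x + y) = f x + f y.
Proof. by case: f_hom => hl _ _; rewrite -(scale1r x) hl !scale1r. Qed.

Lemma alg_homZ r x : f (r *: x) = r *: f x.
Proof. by case: f_hom => hl _ _; rewrite -[r *: x]addr0 hl alg_hom0 addr0. Qed.

Lemma alg_hom1 : f 1 = 1.
Proof. by case: f_hom. Qed.

Lemma alg_homM x y : f (x * y) = f x * f y.
Proof. by case: f_hom. Qed.

Lemma alg_hom_sum N (F : 'I_N -> S) : f (\sum_(i < N) F i) = \sum_(i < N) f (F i).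
Proof. exact: (big_morph f alg_homD alg_hom0). Qed.

Lemma alg_hom_comp_jet (A : comAlgType R) n (phi : nat -> A -> S) :
  is_jet_hom n phi -> is_jet_hom n (fun i a => f (phi i a)).
Proof.
case=> phi0 phil phi1 phiM; split.
- by move=> i a /phi0 ->; rewrite alg_hom0.
- by move=> i r a b; rewrite phil alg_homD alg_homZ.
- by move=> i; rewrite phi1; case: (i == 0)%N; rewrite ?alg_hom1 ?alg_hom0.
- move=> k a b hk; rewrite phiM // alg_hom_sum.
  by apply: eq_bigr => i _; rewrite alg_homM.
Qed.

End AlgHom.

Section JetHom.
Variables (A C : comAlgType R) (n : jorder) (phi : nat -> A -> C).
Hypothesis phi_jet : is_jet_hom n phi.

Lemma jet_hom0 i : phi i 0 = 0.
Proof.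
case: phi_jet => _ hl _ _; apply: idem_add_eq0.
by have := hl i 1 0 0; rewrite !scale1r addr0.
Qed.

Lemma jet_homD i a b : phi i (a + b) = phi i a + phi i b.
Proof. by case: phi_jet => _ hl _ _; rewrite -(scale1r a) hl !scale1r. Qed.

Lemma jet_homZ i r a : phi i (r *: a) = r *: phi i a.
Proof. by case: phi_jet => _ hl _ _; rewrite -[r *: a]addr0 hl jet_hom0 addr0. Qed.

Lemma jet_hom_scalar i r : phi i (r%:A) = if i == 0%N then r%:A else 0.
Proof.
by case: phi_jet => _ _ phi1 _; rewrite jet_homZ phi1; case: (i == 0)%N; rewrite ?scaler0.
Qed.

End JetHom.

Lemma jet_algebra_hom_eq (A An C : comAlgType R) n (gamma : nat -> A -> An)
    (g g' : An -> C) :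
  is_jet_algebra n gamma -> is_alg_hom g -> is_alg_hom g' ->
  (forall i a, g (gamma i a) = g' (gamma i a)) -> forall x, g x = g' x.
Proof.
move=> [gamma_jet gamma_univ] g_hom g'_hom eq_g x.
have [f [_ _ f_uniq]] := gamma_univ C _ (alg_hom_comp_jet g_hom gamma_jet).
by rewrite (f_uniq g) // (f_uniq g') // => i a; rewrite eq_g.
Qed.

End Homomorphisms.

Section Derivations.
Variables (R : comPzRingType) (S : comAlgType R) (M : lmodType S).
Local Notation act := (fun (x : S) (v : M) => x *: v).

Section Der.
Variable D : S -> M.
Hypothesis D_der : is_der act D.

Lemma der0 : D 0 = 0.
Proof. by case: D_der => _ DD _; apply: idem_add_eq0; rewrite -DD addr0. Qed.

Lemma der1 : D 1 = 0.
Proof.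
by case: D_der => _ _ DM; apply: idem_add_eq0; rewrite -{1}(mulr1 1) DM scale1r.
Qed.

Lemma der_sum N (F : 'I_N -> S) : D (\sum_(i < N) F i) = \sum_(i < N) D (F i).
Proof. by case: D_der => _ DD _; apply: (big_morph D DD der0). Qed.

Lemma der_triv_ext_section : is_alg_hom (fun x => ((x, D x) : triv_ext M)).
Proof.
case: D_der => DZ DD DM; split.
- by move=> r x y; rewrite triv_ext_addE triv_ext_scaleE /= DD DZ.
- by rewrite triv_ext_oneE der1.
- by move=> x y; rewrite triv_ext_mulE /= DM.
Qed.

End Der.

Lemma triv_ext_section_der (f : S -> triv_ext M) :
  is_alg_hom f -> (forall x, (f x).1 = x) -> is_der act (fun x => (f x).2).
Proof.
move=> f_hom f_sect; split.
- by move=> r x; rewrite alg_homZ.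
- by move=> x y; rewrite alg_homD.
- by move=> x y; rewrite alg_homM // triv_ext_mulE /= !f_sect.
Qed.

Lemma der_comp_alg_hom (T : comAlgType R) (pi : T -> S) (D : S -> M) :
  is_alg_hom pi -> is_der act D -> is_der (fun (x : T) (v : M) => pi x *: v) (D \o pi).
Proof.
move=> pi_hom [DZ DD DM]; split => [r x|x y|x y] /=.
- by rewrite (alg_homZ pi_hom) DZ (alg_homZ pi_hom) (alg_hom1 pi_hom).
- by rewrite alg_homD // DD.
- by rewrite alg_homM // DM.
Qed.

End Derivations.

Section JetDerivations.
Variables (R : comPzRingType) (A An : comAlgType R) (M : lmodType An).
Variables (n : jorder) (gamma : nat -> A -> An).
Local Notation act := (fun (x : An) (v : M) => x *: v).

Lemma jact_scalar r (m : nat -> M) k : is_jet_hom n gamma ->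
  jact act n gamma (r%:A) m k = if inb k n then r%:A *: m k else 0.
Proof.
move=> gamma_jet; rewrite /jact; case: ifP => // _.
rewrite big_ord_recl /= subn0 (jet_hom_scalar gamma_jet) big1 ?addr0 // => i _.
by rewrite (jet_hom_scalar gamma_jet) scale0r.
Qed.

Lemma derPhi_derB (D : An -> M) :
  is_jet_hom n gamma -> is_der act D -> is_derB act n gamma (derPhi n gamma D).
Proof.
move=> gamma_jet D_der; have [DZ DD DM] := D_der.
have [_ _ _ gammaM] := gamma_jet.
split => [a k|r a k|a b k|a b k]; rewrite /derPhi.
- by move=> /negbTE ->.
- by rewrite jact_scalar //; case: ifP => // _; rewrite (jet_homZ gamma_jet) DZ.
- by case: ifP => _; rewrite ?addr0 // (jet_homD gamma_jet) DD.
rewrite /jact; case: ifP => hk; last by rewrite addr0.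
have in_range i : (i < k.+1)%N -> inb (k - i) n.
  by move=> _; rewrite (inb_le hk) ?leq_subr.
rewrite gammaM // (der_sum D_der).
under [X in _ = X + _]eq_bigr => i _ do rewrite in_range //.
under [X in _ = _ + X]eq_bigr => i _ do rewrite in_range //.
rewrite (sum_ord_sub_rev k (fun i j => gamma i b *: D (gamma j a))) -big_split.
by apply: eq_bigr => i _; rewrite DM.
Qed.

Section DerB.
Variable E : A -> nat -> M.
Hypotheses (gamma_jet : is_jet_hom n gamma) (E_der : is_derB act n gamma E).

Lemma derBZ r a k : E (r *: a) k = r%:A *: E a k.
Proof.
case: E_der => E0 EZ _ _; rewrite EZ jact_scalar //.
by case: ifP => // /negbT /E0 ->; rewrite scaler0.
Qed.

Lemma derB1 k : E 1 k = 0.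
Proof.
case: E_der => E0 _ _ EM; case hk: (inb k n); last by rewrite E0 ?hk.
have := jact_scalar 1 (E 1) k gamma_jet; rewrite hk !scale1r => jact1.
by apply: idem_add_eq0; have := EM 1 1 k; rewrite mulr1 jact1.
Qed.

Lemma derB_jet_hom :
  is_jet_hom n (fun i a => ((gamma i a, E a i) : triv_ext M)).
Proof.
have [gamma0 gammal gamma1 gammaM] := gamma_jet.
have [E0 _ ED EM] := E_der.
split.
- by move=> i a hi; rewrite gamma0 // E0.
- by move=> i r a b; rewrite triv_ext_addE triv_ext_scaleE /= gammal ED derBZ.
- by move=> i; rewrite triv_ext_natE gamma1 derB1.
move=> k a b hk; rewrite triv_ext_sumE /= gammaM // EM /jact hk big_split /=.
by rewrite (sum_ord_sub_rev k (fun i j => gamma j b *: E a i)).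
Qed.

End DerB.

Lemma derB_derPhi (E : A -> nat -> M) :
  is_jet_algebra n gamma -> is_derB act n gamma E ->
  exists D : An -> M, is_der act D /\ forall a k, derPhi n gamma D a k = E a k.
Proof.
move=> gamma_alg E_der; have [gamma_jet gamma_univ] := gamma_alg.
have [f [f_hom f_gamma _]] := gamma_univ _ _ (derB_jet_hom gamma_jet E_der).
have f_sect x : (f x).1 = x.
  have fst_hom : is_alg_hom (fun x => (f x).1).
    by split=> [r y z||y z]; rewrite ?alg_homD ?alg_homZ ?alg_hom1 ?alg_homM.
  by apply: (jet_algebra_hom_eq gamma_alg fst_hom) => [|i a]; rewrite ?f_gamma.
exists (fun x => (f x).2); split; first exact: triv_ext_section_der.
move=> a k; rewrite /derPhi f_gamma /=; case: ifP => // /negbT.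
by case: E_der => E0 _ _ _ /E0 ->.
Qed.

Lemma derPhi_inj (D D' : An -> M) :
  is_jet_algebra n gamma -> is_der act D -> is_der act D' ->
  (forall a k, derPhi n gamma D a k = derPhi n gamma D' a k) ->
  forall x, D x = D' x.
Proof.
move=> gamma_alg D_der D'_der eq_Phi x.
have [[gamma0 _ _ _] _] := gamma_alg.
have eq_D i a : D (gamma i a) = D' (gamma i a).
  case hi: (inb i n); first by have := eq_Phi a i; rewrite /derPhi hi.
  by rewrite gamma0 ?hi // der0 // der0.
have := jet_algebra_hom_eq gamma_alg (der_triv_ext_section D_der)
  (der_triv_ext_section D'_der) (fun i a => congr1 (pair _) (eq_D i a)) x.
by move/(congr1 snd).
Qed.

End JetDerivations.

Lemma derPhi_trunc (R : comPzRingType) (A An Am : comAlgType R) (M : zmodType)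
    n m (gn : nat -> A -> An) (gm : nat -> A -> Am) (pi : An -> Am) (D : Am -> M) :
  jlt n m -> (forall i a, inb i n -> pi (gn i a) = gm i a) ->
  forall a k, derPhi n gn (D \o pi) a k = jtrunc n (derPhi m gm D a) k.
Proof.
move=> lt_nm pi_gamma a k; rewrite /derPhi /jtrunc /=.
by case: ifP => // hk; rewrite pi_gamma // (inb_jlt lt_nm hk).
Qed.

Theorem lemma5p1 (R : comPzRingType) (A : comAlgType R) :
  (forall (n : jorder) (An : comAlgType R) (gamma : nat -> A -> An),
     is_jet_algebra n gamma ->
     forall M : lmodType An,
       let act := fun (x : An) (v : M) => x *: v in
       [/\ forall D : An -> M, is_der act D -> is_derB act n gamma (derPhi n gamma D),
           forall E : A -> nat -> M, is_derB act n gamma E ->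
             exists D : An -> M, is_der act D /\
               forall a k, derPhi n gamma D a k = E a k &
           forall D D' : An -> M, is_der act D -> is_der act D' ->
             (forall a k, derPhi n gamma D a k = derPhi n gamma D' a k) ->
             forall x, D x = D' x]) /\
  (forall (n m : jorder) (An Am : comAlgType R)
          (gn : nat -> A -> An) (gm : nat -> A -> Am) (pi : An -> Am),
     is_jet_algebra n gn -> is_jet_algebra m gm -> jlt n m ->
     is_alg_hom pi -> (forall i a, inb i n -> pi (gn i a) = gm i a) ->
     forall (M : lmodType Am) (D : Am -> M),
       is_der (fun (x : Am) (v : M) => x *: v) D ->
       is_der (fun (x : An) (v : M) => pi x *: v) (D \o pi) /\
       forall a k, derPhi n gn (D \o pi) a k = jtrunc n (derPhi m gm D a) k).
Proof.
split.
- move=> n An gamma gamma_alg M act; split.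
  + by move=> D; apply: derPhi_derB; case: gamma_alg.
  + by move=> E; apply: derB_derPhi.
  + by move=> D D'; apply: derPhi_inj.
- move=> n m An Am gn gm pi _ _ lt_nm pi_hom pi_gamma M D D_der; split.
  + exact: der_comp_alg_hom.
  + exact: derPhi_trunc.
Qed.
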